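(* Let $(T,(V_t)_{t\in T})$ be a lean tree-decomposition of a graph $H$ into finite parts, and root $T$ at an arbitrary node $r$. Then every rooted ray in $T$ arises from at most one end of $H$. Moreover, if a rooted ray $R$ in $T$ arises from an end $\varepsilon$ of $H$, then $\liminf_{e\in E(R)}V_e=\mathrm{Dom}(\varepsilon)$.
   Context: A tree-decomposition $(T,(V_t)_{t\in T})$ of $H$ consists of a tree $T$ and bags $V_t\subseteq V(H)$ covering all vertices and edges of $H$ such that for each vertex $v$ the nodes $t$ with $v\in V_t$ form a subtree; it is into finite parts if all bags are finite. For an edge $e=st$ of $T$, $V_e:=V_s\cap V_t$. The decomposition is lean if for every two (not necessarily distinct) nodes $s,t$ and all $Z_s\subseteq V_s$, $Z_t\subseteq V_t$ with $|Z_s|=|Z_t|=:\ell\in\mathbb N$, either $H$ contains $\ell$ pairwise disjoint $Z_s$–$Z_t$ paths or some edge $e$ of the $s$–$t$ path in $T$ has $|V_e|<\ell$. With $T$ rooted at $r$, $\le_T$ is the tree-order, a rooted ray is a ray in $T$ starting at $r$, and for an edge $e$, $T_e$ is the component of $T-e$ not containing $r$ and $H\mathring{\uparrow}e$ is the subgraph of $H$ induced on $\bigcup_{u\in T_e}V_u\setminus V_e$. An end of $H$ is an equivalence class of rays, two rays being equivalent if for every finite $X\subseteq V(H)$ they have tails in the same component of $H-X$. If $X\subseteq V(H)$ meets every ray of an end $\varepsilon$ in only finitely many vertices, $C_H(X,\varepsilon)$ denotes the unique component of $H-X$ containing a tail of every ray in $\varepsilon$. An end $\varepsilon$ gives rise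 to (i.e. the ray arises from $\varepsilon$) the rooted ray $R$ in $T$ if every ray in $\varepsilon$ meets every bag $V_t$ with $t\in R$ in only finitely many vertices, and for every edge $e=st$ of $R$ with $s<_T t$ we have $C_H(V_s,\varepsilon)\subseteq H\mathring{\uparrow}e$. A vertex $v$ dominates $\varepsilon$ if $v\in C_H(X,\varepsilon)$ for every finite $X\subseteq V(H)\setminus\{v\}$; $\mathrm{Dom}(\varepsilon)$ is the set of vertices dominating $\varepsilon$. For a ray $R=t_0e_0t_1e_1\dots$ in $T$, $\liminf_{e\in E(R)}V_e:=\bigcup_{n\in\mathbb N}\bigcap_{i\ge n}V_{e_i}$. *)

From Stdlib Require Import List Arith.
Import ListNotations.
Set Implicit Arguments.

Fixpoint chain {V : Type} (adj : V -> V -> Prop) (P : list V) : Prop :=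
  match P with
  | [] => True
  | x :: Q => match Q with
              | [] => True
              | y :: _ => adj x y /\ chain adj Q
              end
  end.

Definition is_path {V : Type} (adj : V -> V -> Prop) (P : list V) (a b : V) : Prop :=
  NoDup P /\ chain adj P /\ hd_error P = Some a /\ last P a = b.

Definition finite_set {V : Type} (X : V -> Prop) : Prop :=
  exists L : list V, forall x, X x -> In x L.

(* |X| < l (for a possibly infinite set X: false if X is infinite) *)
Definition card_lt {V : Type} (X : V -> Prop) (l : nat) : Prop :=
  exists L : list V, length L < l /\ forall x, X x -> In x L.

Definition is_ray {V : Type} (adj : V -> V -> Prop) (R : nat -> V) : Prop :=
  (forall i j, R i = R j -> i = j) /\ forall n, adj (R n) (R (S n)).

Definition AB_path {V : Type} (adj : V -> V -> Prop) (A B : V -> Prop) (P : list V) : Prop :=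
  exists a b, is_path adj P a b /\ A a /\ B b /\
    (forall x, In x P -> A x -> x = a) /\ (forall x, In x P -> B x -> x = b).

Definition symmetric_rel {V : Type} (adj : V -> V -> Prop) : Prop :=
  forall x y, adj x y -> adj y x.
Definition irreflexive_rel {V : Type} (adj : V -> V -> Prop) : Prop :=
  forall x, ~ adj x x.

Definition is_tree {N : Type} (tadj : N -> N -> Prop) : Prop :=
  symmetric_rel tadj /\ irreflexive_rel tadj /\
  forall s t, exists P, is_path tadj P s t /\ forall P', is_path tadj P' s t -> P' = P.

Definition tree_decomposition {V N : Type} (adj : V -> V -> Prop) (tadj : N -> N -> Prop)
  (bag : N -> V -> Prop) : Prop :=
  is_tree tadj /\
  (forall v, exists t, bag t v) /\
  (forall u v, adj u v -> exists t, bag t u /\ bag t v) /\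
  (forall s t P u v, is_path tadj P s t -> In u P -> bag s v -> bag t v -> bag u v).

Definition finite_parts {V N : Type} (bag : N -> V -> Prop) : Prop :=
  forall t, finite_set (bag t).

(* V_e for the edge e = st *)
Definition adhesion {V N : Type} (bag : N -> V -> Prop) (s t : N) (v : V) : Prop :=
  bag s v /\ bag t v.

Definition lean {V N : Type} (adj : V -> V -> Prop) (tadj : N -> N -> Prop)
  (bag : N -> V -> Prop) : Prop :=
  forall (s t : N) (Zs Zt : list V) (l : nat),
    NoDup Zs -> NoDup Zt -> length Zs = l -> length Zt = l ->
    (forall z, In z Zs -> bag s z) -> (forall z, In z Zt -> bag t z) ->
    (exists Ps : nat -> list V,
        (forall i, i < l -> AB_path adj (fun x => In x Zs) (fun x => In x Zt) (Ps i)) /\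
        (forall i j x, i < l -> j < l -> i <> j -> In x (Ps i) -> ~ In x (Ps j)))
    \/
    (forall P, is_path tadj P s t ->
       exists k a b, nth_error P k = Some a /\ nth_error P (S k) = Some b /\
                     card_lt (adhesion bag a b) l).

Definition tle {N : Type} (tadj : N -> N -> Prop) (r s t : N) : Prop :=
  exists P, is_path tadj P r t /\ In s P.

Definition rooted_ray {N : Type} (tadj : N -> N -> Prop) (r : N) (R : nat -> N) : Prop :=
  is_ray tadj R /\ R 0 = r.

Definition reach {V : Type} (adj : V -> V -> Prop) (X : V -> Prop) (a b : V) : Prop :=
  exists P, is_path adj P a b /\ forall x, In x P -> ~ X x.

Definition ray_equiv {V : Type} (adj : V -> V -> Prop) (R1 R2 : nat -> V) : Prop :=
  forall X : list V, exists n m,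
    (forall k, n <= k -> ~ In (R1 k) X) /\ (forall k, m <= k -> ~ In (R2 k) X) /\
    reach adj (fun x => In x X) (R1 n) (R2 m).

Definition is_end {V : Type} (adj : V -> V -> Prop) (E : (nat -> V) -> Prop) : Prop :=
  exists R0, is_ray adj R0 /\ forall R, E R <-> (is_ray adj R /\ ray_equiv adj R R0).

(* v lies in C_H(X, E): the component of H - X containing a tail of every ray of E *)
Definition compC {V : Type} (adj : V -> V -> Prop) (X : V -> Prop)
  (E : (nat -> V) -> Prop) (v : V) : Prop :=
  ~ X v /\ forall R, E R -> exists n, (forall k, n <= k -> ~ X (R k)) /\ reach adj X v (R n).

Definition dominates {V : Type} (adj : V -> V -> Prop) (E : (nat -> V) -> Prop) (v : V) : Prop :=
  forall X : list V, ~ In v X -> compC adj (fun x => In x X) E v.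

(* v is a vertex of H ↑̊ e for the edge e = st, s <_T t *)
Definition up_part {V N : Type} (tadj : N -> N -> Prop) (r : N) (bag : N -> V -> Prop)
  (s t : N) (v : V) : Prop :=
  (exists u, tle tadj r t u /\ bag u v) /\ ~ adhesion bag s t v.

Definition arises {V N : Type} (adj : V -> V -> Prop) (tadj : N -> N -> Prop) (r : N)
  (bag : N -> V -> Prop) (E : (nat -> V) -> Prop) (R : nat -> N) : Prop :=
  (forall R', E R' -> forall n, finite_set (fun x => bag (R n) x /\ exists k, R' k = x)) /\
  (forall n v, compC adj (bag (R n)) E v -> up_part tadj r bag (R n) (R (S n)) v).

Definition liminf_adh {V N : Type} (bag : N -> V -> Prop) (R : nat -> N) (v : V) : Prop :=
  exists n, forall i, n <= i -> adhesion bag (R i) (R (S i)) v.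

From Stdlib Require Import List Arith Lia Classical FinFun.
Import ListNotations.
Set Implicit Arguments.
Unset Strict Implicit.

(* Write e_n for the n-th edge of the rooted ray R, U_n for the vertex set of H↑̊e_n and
   C_n := C_H(V_{R n}, ε). Every vertex lies in only finitely many U_n, a neighbour of a vertex
   of U_n lies in U_n or in V_{e_n}, and if ε gives rise to R then C_n ⊆ U_n.

   Leanness adds the key fact that for arbitrarily large n every vertex of V_{e_n} has a
   neighbour in C_n. Otherwise choose n minimising the number μ of vertices of V_{R n} with a
   neighbour in C_n. Every later adhesion set then has more than μ vertices, so leanness links
   these μ vertices, together with a vertex y of V_{e_n} without neighbour in C_n, to μ+1
   vertices of a later bag that lie in C_n or have a neighbour in it. The path from y ends in
   C_n or at a neighbour of C_n in V_{R n}, so it meets another source, which is impossible.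

   Hence a vertex of V_{e_n} for all large n has a neighbour in some C_n avoiding a given
   finite set, so it dominates ε; and a dominating vertex outside V_{e_n} for some large n
   would be joined to C_n ⊆ U_n avoiding V_{e_n}, hence lie in U_n. If ε and ε' both give
   rise to R, a ray of ε enters U_m through V_{e_m} for large m, where every vertex is
   adjacent to C_m(ε'); so C_n(ε) and C_n(ε') meet for every n, and since C_n eventually
   avoids any finite set, ε = ε'. *)

Lemma last_cons_indep {A} (x : A) l d d' : last (x :: l) d = last (x :: l) d'.
Proof.
  revert x; induction l as [|y l IH]; intros x; [reflexivity|].
  change (last (y :: l) d = last (y :: l) d'). apply IH.
Qed.

Lemma last_cons_In {A} (x : A) l d : In (last (x :: l) d) (x :: l).
Proof.
  revert x; induction l as [|y l IH]; intros x; [left; reflexivity|].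
  right. apply IH.
Qed.

Lemma last_app_cons {A} (l1 l2 : list A) x d d' :
  last (l1 ++ x :: l2) d = last (x :: l2) d'.
Proof.
  induction l1 as [|y l1 IH]; simpl; [apply last_cons_indep|].
  rewrite IH. destruct l1; reflexivity.
Qed.

Lemma chain_app_l {A} (rel : A -> A -> Prop) l1 l2 : chain rel (l1 ++ l2) -> chain rel l1.
Proof.
  induction l1 as [|x l1 IH]; simpl; auto.
  intros H. destruct l1; simpl in *; auto. split; [tauto|]. apply IH. tauto.
Qed.

Lemma chain_app_r {A} (rel : A -> A -> Prop) l1 l2 : chain rel (l1 ++ l2) -> chain rel l2.
Proof.
  induction l1 as [|x l1 IH]; simpl; auto.
  intros H. apply IH. destruct l1; simpl in *; [destruct l2; tauto|tauto].
Qed.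

Lemma chain_snoc {A} (rel : A -> A -> Prop) l x d :
  l <> [] -> chain rel l -> rel (last l d) x -> chain rel (l ++ [x]).
Proof.
  induction l as [|a l IH]; intros Hne Hc Hl; [congruence|].
  destruct l as [|b l]; simpl in *; auto.
  destruct Hc as [Hab Hc]. split; auto. apply IH; auto; congruence.
Qed.

Lemma chain_crossing {A} (rel : A -> A -> Prop) (Pr : A -> Prop) l a :
  chain rel l -> hd_error l = Some a -> Pr a -> ~ Pr (last l a) ->
  exists p q, In p l /\ In q l /\ rel p q /\ Pr p /\ ~ Pr q.
Proof.
  revert a; induction l as [|x l IH]; intros a Hc Hh Ha Hl; [discriminate|].
  injection Hh as <-. destruct l as [|y l]; [contradiction|].
  destruct Hc as [Hxy Hc]. destruct (classic (Pr y)) as [Hy|Hy].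
  - destruct (IH y Hc eq_refl Hy) as [p [q Hpq]].
    + rewrite (last_cons_indep y l y x). exact Hl.
    + exists p, q. simpl in *. tauto.
  - exists x, y. simpl. tauto.
Qed.

Lemma exists_least_nat (Q : nat -> Prop) k : Q k -> exists m, Q m /\ forall j, Q j -> m <= j.
Proof.
  induction k as [k IH] using lt_wf_ind. intros Hk.
  destruct (classic (exists j, j < k /\ Q j)) as [[j [Hj HQ]]|Hno]; [exact (IH j Hj HQ)|].
  exists k. split; auto. intros j Hj. destruct (le_lt_dec k j); auto. exfalso; eauto.
Qed.

Lemma nth_error_map_seq {A} (f : nat -> A) a len k x :
  nth_error (map f (seq a len)) k = Some x -> x = f (a + k).
Proof.
  rewrite nth_error_map, nth_error_seq. destruct (Nat.ltb k len); simpl; congruence.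
Qed.

Lemma in_map_seq_inj {A} (f : nat -> A) a len m :
  Injective f -> In (f m) (map f (seq a len)) <-> a <= m < a + len.
Proof.
  intros Hf. rewrite in_map_iff. split.
  - intros [x [Hx Hin]]. apply Hf in Hx. subst. apply in_seq in Hin. exact Hin.
  - intros H. exists m. split; auto. apply in_seq. exact H.
Qed.

Section Counting.
Variable V : Type.

Definition has_at_least (X : V -> Prop) (k : nat) : Prop :=
  exists L, NoDup L /\ length L = k /\ forall x, In x L -> X x.

Lemma has_at_least_not_card_lt X k : has_at_least X k -> ~ card_lt X k.
Proof.
  intros [L [HL [Hlen HX]]] [L' [Hlen' HX']].
  assert (length L <= length L') by (apply NoDup_incl_length; auto; intros x Hx; auto).
  lia.
Qed.

Lemma has_at_least_of_list X L k :
  NoDup L -> (forall x, In x L -> X x) -> k <= length L -> has_at_least X k.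
Proof.
  intros HL HX Hk. exists (firstn k L). split; [|split].
  - apply NoDup_app_remove_r with (skipn k L). rewrite firstn_skipn. exact HL.
  - apply firstn_length_le. exact Hk.
  - intros x Hx. apply HX. rewrite <- (firstn_skipn k L). apply in_or_app. auto.
Qed.

Lemma has_at_least_add X Y z k :
  has_at_least Y k -> ~ Y z -> X z -> (forall x, Y x -> X x) -> has_at_least X (S k).
Proof.
  intros [L [HL [Hlen HY]]] Hz HXz HYX. exists (z :: L). split; [|split].
  - constructor; auto.
  - simpl. congruence.
  - intros x [<-|Hx]; auto.
Qed.

Lemma finite_enum (X : V -> Prop) :
  finite_set X -> exists L, NoDup L /\ forall x, In x L <-> X x.
Proof.
  intros [L0 H0]. revert X H0. induction L0 as [|a L0 IH]; intros X H0.
  - exists []. split; [constructor|]. intros x; split; [intros []|intros Hx; apply (H0 x Hx)].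
  - destruct (IH (fun x => X x /\ x <> a)) as [L [HL1 HL2]].
    { intros x [Hx Hne]. destruct (H0 x Hx); auto. congruence. }
    destruct (classic (X a)) as [Ha|Ha].
    + exists (a :: L). split.
      * constructor; auto. intros Hin. apply HL2 in Hin. tauto.
      * intros x. simpl. rewrite HL2. split; [intros [<-|[]]; auto|].
        intros Hx. destruct (classic (a = x)); auto.
    + exists L. split; auto. intros x. rewrite HL2. split; [tauto|].
      intros Hx; split; auto. intros ->; auto.
Qed.

End Counting.

Section Connectivity.
Variables (V : Type) (adj : V -> V -> Prop).

(* Walks rather than paths: they concatenate without removing repeated vertices. *)
Inductive conn (X : V -> Prop) : V -> V -> Prop :=
| conn_refl a : ~ X a -> conn X a a
| conn_step a b c : ~ X a -> adj a b -> conn X b c -> conn X a c.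

Lemma conn_notin_r X a b : conn X a b -> ~ X b.
Proof. intros H; induction H; auto. Qed.

Lemma conn_trans X a b c : conn X a b -> conn X b c -> conn X a c.
Proof. intros H; induction H; intros; auto. eapply conn_step; eauto. Qed.

Lemma conn_snoc X a b c : conn X a b -> adj b c -> ~ X c -> conn X a c.
Proof.
  intros H; induction H; intros.
  - eapply conn_step; eauto. apply conn_refl; auto.
  - eapply conn_step; eauto.
Qed.

Lemma conn_weaken (X Y : V -> Prop) a b :
  conn Y a b -> (forall z, X z -> Y z) -> conn X a b.
Proof.
  intros H; induction H; intros HXY.
  - apply conn_refl; auto.
  - eapply conn_step; eauto.
Qed.

Lemma conn_restrict (X Y : V -> Prop) a b :
  conn X a b -> (forall z, conn X a z -> ~ Y z) -> conn Y a b.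
Proof.
  intros H; induction H; intros HY.
  - apply conn_refl. apply HY. apply conn_refl; auto.
  - eapply conn_step; eauto.
    + apply HY. apply conn_refl; auto.
    + apply IHconn. intros z Hz. apply HY. eapply conn_step; eauto.
Qed.

Lemma conn_crossing X (Pr : V -> Prop) a b :
  conn X a b -> ~ Pr a -> Pr b -> exists p q, conn X a p /\ adj p q /\ ~ Pr p /\ Pr q.
Proof.
  intros H; induction H as [a Ha|a b c Ha Hab Hbc IH]; intros Hna Hc; [contradiction|].
  destruct (classic (Pr b)) as [Hb|Hb].
  - exists a, b. repeat split; auto. apply conn_refl; auto.
  - destruct (IH Hb Hc) as [p [q [Hbp Hpq]]].
    exists p, q. split; auto. eapply conn_step; eauto.
Qed.

Lemma conn_ray_segment X (P : nat -> V) i j :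
  (forall n, adj (P n) (P (S n))) -> i <= j ->
  (forall k, i <= k -> k <= j -> ~ X (P k)) -> conn X (P i) (P j).
Proof.
  intros Hadj Hij. induction Hij; intros HX.
  - apply conn_refl. apply HX; lia.
  - eapply conn_snoc; [apply IHHij; intros; apply HX; lia|apply Hadj|apply HX; lia].
Qed.

Lemma chain_conn X P a b :
  chain adj P -> hd_error P = Some a -> last P a = b ->
  (forall x, In x P -> ~ X x) -> conn X a b.
Proof.
  revert a; induction P as [|x P IH]; intros a Hc Hh Hl HX; [discriminate|].
  injection Hh as <-. destruct P as [|y P].
  - subst b. apply conn_refl. apply HX. left; reflexivity.
  - destruct Hc as [Hxy Hc]. eapply conn_step; eauto; [apply HX; left; reflexivity|].
    apply IH; auto.
    + rewrite <- Hl. apply (last_cons_indep y P y x).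
    + intros z Hz. apply HX. right. exact Hz.
Qed.

Lemma reach_cons X a b c : ~ X a -> adj a b -> reach adj X b c -> reach adj X a c.
Proof.
  intros Ha Hab [Q [[Hn [Hc [Hh Hl]]] HX]].
  destruct Q as [|b' Q]; [discriminate|]. injection Hh as ->.
  destruct (classic (In a (b :: Q))) as [Hin|Hin].
  - destruct (in_split _ _ Hin) as [l1 [l2 E]].
    exists (a :: l2). split; [split; [|split; [|split]]|].
    + rewrite E in Hn. eapply NoDup_app_remove_l; eauto.
    + rewrite E in Hc. eapply chain_app_r; eauto.
    + reflexivity.
    + rewrite <- Hl, E. symmetry. apply last_app_cons.
    + intros x Hx. apply HX. rewrite E. apply in_or_app. right. exact Hx.
  - exists (a :: b :: Q). split; [split; [|split; [|split]]|].
    + constructor; auto.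
    + simpl. split; auto.
    + reflexivity.
    + rewrite <- Hl. apply (last_cons_indep b Q a b).
    + intros x [<-|Hx]; auto.
Qed.

Lemma reach_iff_conn X a b : reach adj X a b <-> conn X a b.
Proof.
  split.
  - intros [P [[_ [Hc [Hh Hl]]] HX]]. eapply chain_conn; eauto.
  - intros H; induction H.
    + exists [a]. repeat split; simpl; auto.
      * constructor; [auto|constructor].
      * intros x [<-|[]]; auto.
    + eapply reach_cons; eauto.
Qed.

Hypothesis adj_sym : symmetric_rel adj.

Lemma conn_sym X a b : conn X a b -> conn X b a.
Proof.
  intros H; induction H.
  - apply conn_refl; auto.
  - eapply conn_snoc; eauto.
Qed.

Lemma conn_ray_between X (P : nat -> V) i j :
  (forall n, adj (P n) (P (S n))) ->
  (forall k, Nat.min i j <= k -> k <= Nat.max i j -> ~ X (P k)) -> conn X (P i) (P j).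
Proof.
  intros Hadj HX. destruct (le_lt_dec i j).
  - apply conn_ray_segment; auto. intros; apply HX; lia.
  - apply conn_sym, conn_ray_segment; auto; [lia|]. intros; apply HX; lia.
Qed.

End Connectivity.

Section Ends.
Variables (V : Type) (adj : V -> V -> Prop).
Hypothesis adj_sym : symmetric_rel adj.

Lemma injective_eventually_avoids (P : nat -> V) (L : list V) :
  Injective P -> exists K, forall k, K <= k -> ~ In (P k) L.
Proof.
  intros Hinj. induction L as [|a L [K HK]]; [exists 0; intros k _ []|].
  destruct (classic (exists i, P i = a)) as [[i <-]|Hno].
  - exists (Nat.max K (S i)). intros k Hk [Hin|Hin].
    + apply Hinj in Hin. lia.
    + apply (HK k); auto; lia.
  - exists K. intros k Hk [Hin|Hin]; [apply Hno; eauto|apply (HK k); auto].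
Qed.

Lemma ray_equiv_refl P : is_ray adj P -> ray_equiv adj P P.
Proof.
  intros [Hinj _] X. destruct (injective_eventually_avoids X Hinj) as [K HK].
  exists K, K. repeat split; auto. apply reach_iff_conn, conn_refl, HK; auto.
Qed.

Lemma ray_equiv_sym P Q : ray_equiv adj P Q -> ray_equiv adj Q P.
Proof.
  intros H X. destruct (H X) as [n [m [HP [HQ Hr]]]].
  exists m, n. repeat split; auto. apply reach_iff_conn, conn_sym, reach_iff_conn; auto.
Qed.

Lemma ray_equiv_trans P Q S :
  is_ray adj Q -> ray_equiv adj P Q -> ray_equiv adj Q S -> ray_equiv adj P S.
Proof.
  intros [_ Hadj] H1 H2 X.
  destruct (H1 X) as [n1 [m1 [A1 [B1 C1]]]].
  destruct (H2 X) as [m2 [s2 [A2 [B2 C2]]]].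
  exists n1, s2. repeat split; auto. apply reach_iff_conn.
  apply reach_iff_conn in C1, C2.
  eapply conn_trans; [exact C1|]. eapply conn_trans; [|exact C2].
  apply conn_ray_between; auto. intros k Hk1 Hk2.
  destruct (le_lt_dec m1 m2); [apply B1|apply A2]; lia.
Qed.

Section OneEnd.
Variable E : (nat -> V) -> Prop.
Hypothesis E_end : is_end adj E.

Lemma end_ray P : E P -> is_ray adj P.
Proof. destruct E_end as [R0 [_ HE]]. intros HP. apply HE in HP. tauto. Qed.

Lemma end_inhabited : exists P, E P.
Proof.
  destruct E_end as [R0 [HR0 HE]]. exists R0. apply HE. split; auto. apply ray_equiv_refl; auto.
Qed.

Lemma end_rays_equiv P Q : E P -> E Q -> ray_equiv adj P Q.
Proof.
  destruct E_end as [R0 [HR0 HE]]. intros HP HQ. apply HE in HP, HQ.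
  apply ray_equiv_trans with R0; [exact HR0|tauto|]. apply ray_equiv_sym. tauto.
Qed.

Lemma end_closed P Q : E Q -> is_ray adj P -> ray_equiv adj P Q -> E P.
Proof.
  destruct E_end as [R0 [HR0 HE]]. intros HQ HP HPQ. apply HE. split; auto.
  apply ray_equiv_trans with Q; [apply (end_ray HQ)|exact HPQ|]. apply HE. exact HQ.
Qed.

End OneEnd.

Lemma end_eq_of_rays_equiv E1 E2 :
  is_end adj E1 -> is_end adj E2 -> (forall P Q, E1 P -> E2 Q -> ray_equiv adj P Q) ->
  forall P, E1 P <-> E2 P.
Proof.
  intros He1 He2 H12 P. split; intros HP.
  - destruct (end_inhabited He2) as [Q HQ].
    apply (end_closed He2 HQ (end_ray He1 HP)). auto.
  - destruct (end_inhabited He1) as [Q HQ].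
    apply (end_closed He1 HQ (end_ray He2 HP)). apply ray_equiv_sym. auto.
Qed.

Definition in_comp (X : V -> Prop) (E : (nat -> V) -> Prop) (v : V) : Prop :=
  ~ X v /\ forall P, E P -> exists n, (forall k, n <= k -> ~ X (P k)) /\ conn adj X v (P n).

Lemma compC_iff_in_comp X E v : compC adj X E v <-> in_comp X E v.
Proof.
  split; intros [Hv H]; split; auto; intros P HP;
    destruct (H P HP) as [n [Hn Hr]]; exists n; split; auto; apply reach_iff_conn; auto.
Qed.

Lemma in_comp_conn X E y z : in_comp X E y -> conn adj X y z -> in_comp X E z.
Proof.
  intros [Hy H] Hc. split; [exact (conn_notin_r Hc)|].
  intros P HP. destruct (H P HP) as [n [Hn Hyn]]. exists n. split; auto.
  eapply conn_trans; [apply conn_sym|]; eauto.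
Qed.

Lemma in_comp_adj X E y z : in_comp X E y -> adj z y -> ~ X z -> in_comp X E z.
Proof.
  intros Hy Hzy Hz. apply (in_comp_conn Hy).
  apply conn_step with z; [exact (proj1 Hy)|apply adj_sym, Hzy|apply conn_refl, Hz].
Qed.

Section InComp.
Variable E : (nat -> V) -> Prop.
Hypothesis E_end : is_end adj E.

Lemma in_comp_ray_tail X x P :
  in_comp X E x -> E P -> exists n, forall k, n <= k -> conn adj X x (P k).
Proof.
  intros [_ Hx] HP. destruct (Hx P HP) as [n [Hn Hxn]]. exists n. intros k Hk.
  eapply conn_trans; [exact Hxn|].
  apply conn_ray_segment; [apply (end_ray E_end HP)|exact Hk|intros; apply Hn; lia].
Qed.

Lemma in_comp_connected X x y : in_comp X E x -> in_comp X E y -> conn adj X x y.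
Proof.
  intros Hx Hy. destruct (end_inhabited E_end) as [P HP].
  destruct (in_comp_ray_tail Hx HP) as [n Hn], (in_comp_ray_tail Hy HP) as [m Hm].
  eapply conn_trans; [apply (Hn (Nat.max n m)); lia|]. apply conn_sym; auto. apply Hm; lia.
Qed.

Lemma in_comp_transfer X Y x :
  in_comp X E x -> (forall z, in_comp X E z -> ~ Y z) -> in_comp Y E x.
Proof.
  intros Hx HY. split; [apply HY; auto|].
  intros P HP. destruct (in_comp_ray_tail Hx HP) as [n Hn]. exists n. split.
  - intros k Hk. apply HY, (in_comp_conn Hx), Hn, Hk.
  - apply conn_restrict with X; [apply Hn; auto|]. intros z Hz. apply HY, (in_comp_conn Hx Hz).
Qed.

Lemma in_comp_eventually (X : V -> Prop) P :
  finite_set X -> E P -> (exists K, forall k, K <= k -> ~ X (P k)) ->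
  exists K, forall k, K <= k -> in_comp X E (P k).
Proof.
  intros [LX HLX] HP [K HK]. exists K. intros k Hk. split; [apply HK; auto|].
  intros Q HQ. destruct (end_rays_equiv E_end HP HQ LX) as [n1 [n2 [A1 [A2 C]]]].
  exists n2. split; [intros j Hj Hx; apply (A2 j Hj); auto|].
  apply reach_iff_conn in C.
  apply conn_trans with (P n1); [|apply conn_weaken with (fun x => In x LX); auto].
  apply conn_ray_between; [exact adj_sym|apply (end_ray E_end HP)|].
  intros j Hj1 Hj2. destruct (le_lt_dec K j); [apply HK; auto|].
  intros Hx. apply (A1 j); [lia|auto].
Qed.

End InComp.

Lemma in_comp_common_ray_equiv (X : list V) E1 E2 w P Q :
  in_comp (fun x => In x X) E1 w -> in_comp (fun x => In x X) E2 w -> E1 P -> E2 Q ->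
  exists n m, (forall k, n <= k -> ~ In (P k) X) /\ (forall k, m <= k -> ~ In (Q k) X) /\
    reach adj (fun x => In x X) (P n) (Q m).
Proof.
  intros [_ H1] [_ H2] HP HQ.
  destruct (H1 P HP) as [n [Hn Hwn]], (H2 Q HQ) as [m [Hm Hwm]].
  exists n, m. repeat split; auto. apply reach_iff_conn.
  eapply conn_trans; [apply conn_sym; eauto|exact Hwm].
Qed.

End Ends.

Section Trees.
Variables (N : Type) (tadj : N -> N -> Prop).

Lemma is_path_prefix P a b X q Y :
  is_path tadj P a b -> P = X ++ q :: Y -> is_path tadj (X ++ [q]) a q.
Proof.
  intros [Hn [Hc [Hh Hl]]] ->. repeat split.
  - apply NoDup_app_remove_r with Y. rewrite <- app_assoc. exact Hn.
  - apply chain_app_l with Y. rewrite <- app_assoc. exact Hc.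
  - destruct X; simpl in *; auto.
  - apply last_last.
Qed.

Lemma is_path_suffix P a b X q Y :
  is_path tadj P a b -> P = X ++ q :: Y -> is_path tadj (q :: Y) q b.
Proof.
  intros [Hn [Hc [Hh Hl]]] ->. repeat split.
  - eapply NoDup_app_remove_l; eauto.
  - eapply chain_app_r; eauto.
  - rewrite <- Hl. symmetry. apply last_app_cons.
Qed.

Lemma is_path_snoc P a b c :
  is_path tadj P a b -> tadj b c -> ~ In c P -> is_path tadj (P ++ [c]) a c.
Proof.
  intros [Hn [Hc [Hh Hl]]] Hbc HcP. destruct P as [|x P]; [discriminate|]. repeat split.
  - apply NoDup_app; [exact Hn|constructor; [intros []|constructor]|].
    intros y Hy [<-|[]]. contradiction.
  - apply chain_snoc with a; [discriminate|exact Hc|rewrite Hl; exact Hbc].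
  - exact Hh.
  - apply last_last.
Qed.

Lemma chain_map_seq R a len :
  (forall n, tadj (R n) (R (S n))) -> chain tadj (map R (seq a len)).
Proof.
  intros H. revert a; induction len as [|len IH]; intros a; simpl; auto.
  destruct len; simpl; auto. split; auto. apply (IH (S a)).
Qed.

Lemma ray_segment_path R a len :
  is_ray tadj R -> is_path tadj (map R (seq a (S len))) (R a) (R (a + len)).
Proof.
  intros [Hinj Hadj]. repeat split.
  - apply Injective_map_NoDup; [exact Hinj|apply seq_NoDup].
  - apply chain_map_seq. exact Hadj.
  - rewrite seq_S, map_app. apply last_last.
Qed.

Lemma tree_path_unique P P' s t :
  is_tree tadj -> is_path tadj P s t -> is_path tadj P' s t -> P = P'.
Proof.
  intros [_ [_ Ht]] H1 H2. destruct (Ht s t) as [Q [_ HQ]].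
  rewrite (HQ _ H1), (HQ _ H2). reflexivity.
Qed.

End Trees.

Lemma disjoint_AB_paths_sources {V} (adj : V -> V -> Prop) (Zs : list V) (B : V -> Prop)
  (Ps : nat -> list V) :
  NoDup Zs ->
  (forall i, i < length Zs -> AB_path adj (fun x => In x Zs) B (Ps i)) ->
  (forall i j x, i < length Zs -> j < length Zs -> i <> j -> In x (Ps i) -> ~ In x (Ps j)) ->
  forall a, In a Zs -> exists i, i < length Zs /\ hd_error (Ps i) = Some a.
Proof.
  intros HZs HPs Hdisj a Ha.
  set (start i := hd a (Ps i)).
  assert (Hstart : forall i, i < length Zs ->
            hd_error (Ps i) = Some (start i) /\ In (start i) (Ps i) /\ In (start i) Zs).
  { intros i Hi. destruct (HPs i Hi) as [x [_ [[_ [_ [Hh _]]] [Hx _]]]].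
    unfold start. destruct (Ps i); [discriminate|]. injection Hh as ->. simpl. auto. }
  set (starts := map start (seq 0 (length Zs))).
  assert (Hnd : NoDup starts).
  { apply Injective_map_NoDup_in; [|apply seq_NoDup].
    intros i j Hi Hj Heq. apply in_seq in Hi, Hj.
    destruct (Nat.eq_dec i j) as [|Hne]; auto. exfalso.
    apply (Hdisj i j (start i)); try lia; [apply Hstart; lia|].
    rewrite Heq. apply Hstart. lia. }
  assert (Hincl : incl Zs starts).
  { apply NoDup_length_incl; auto.
    - unfold starts. rewrite length_map, length_seq. lia.
    - intros x Hx. unfold starts in Hx. apply in_map_iff in Hx as [i [<- Hi]].
      apply in_seq in Hi. apply Hstart. lia. }
  pose proof (Hincl a Ha) as Hs. apply in_map_iff in Hs as [i [Hai Hi]]. apply in_seq in Hi.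
  exists i. split; [lia|]. rewrite <- Hai. apply Hstart. lia.
Qed.

Section RayDecomposition.
Variables (V N : Type) (adj : V -> V -> Prop) (tadj : N -> N -> Prop) (bag : N -> V -> Prop).
Variables (r : N) (R : nat -> N).
Hypothesis td : tree_decomposition adj tadj bag.
Hypothesis R_rooted : rooted_ray tadj r R.

Let tree : is_tree tadj := proj1 td.

Lemma rooted_ray_path n : is_path tadj (map R (seq 0 (S n))) r (R n).
Proof.
  pose proof (ray_segment_path 0 n (proj1 R_rooted)) as H.
  rewrite (proj2 R_rooted) in H. exact H.
Qed.

(* For the edge e_n = R n R (n+1): u ∈ T_{e_n}, x ∈ H↑̊e_n and x ∈ V_{e_n}. *)
Definition ray_subtree (n : nat) (u : N) : Prop := tle tadj r (R (S n)) u.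
Definition ray_up (n : nat) (x : V) : Prop := up_part tadj r bag (R n) (R (S n)) x.
Definition ray_adh (n : nat) (x : V) : Prop := adhesion bag (R n) (R (S n)) x.

Lemma ray_subtree_path_In n u P : ray_subtree n u -> is_path tadj P r u -> In (R (S n)) P.
Proof.
  intros [Q [HQ Hin]] HP. rewrite (tree_path_unique tree HP HQ). exact Hin.
Qed.

Lemma rooted_path_prefix n u P :
  is_path tadj P r u -> In (R n) P -> exists Y, P = map R (seq 0 (S n)) ++ Y.
Proof.
  intros HP Hin. destruct (in_split _ _ Hin) as [X [Y E]].
  pose proof (tree_path_unique tree (is_path_prefix HP E) (rooted_ray_path n)) as Heq.
  exists Y. rewrite E, <- Heq, <- app_assoc. reflexivity.
Qed.

Lemma ray_subtree_antitone n m u : n <= m -> ray_subtree m u -> ray_subtree n u.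
Proof.
  intros Hnm [P [HP Hin]]. destruct (rooted_path_prefix HP Hin) as [Y ->].
  exists (map R (seq 0 (S (S m))) ++ Y). split; auto.
  apply in_or_app. left. apply in_map_seq_inj; [exact (proj1 (proj1 R_rooted))|lia].
Qed.

Lemma ray_subtree_ray_iff n m : ray_subtree n (R m) <-> n < m.
Proof.
  split.
  - intros Hn. pose proof (ray_subtree_path_In Hn (rooted_ray_path m)) as H.
    apply in_map_seq_inj in H; [lia|exact (proj1 (proj1 R_rooted))].
  - intros H. exists (map R (seq 0 (S m))). split; [apply rooted_ray_path|].
    apply in_map_seq_inj; [exact (proj1 (proj1 R_rooted))|lia].
Qed.

Lemma ray_subtree_path_length n u P :
  ray_subtree n u -> is_path tadj P r u -> S (S n) <= length P.
Proof.
  intros Hn HP. destruct (rooted_path_prefix HP (ray_subtree_path_In Hn HP)) as [Y ->].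
  rewrite length_app, length_map, length_seq. lia.
Qed.

Lemma ray_subtree_boundary n p q :
  tadj p q -> ray_subtree n p -> ~ ray_subtree n q -> p = R (S n) /\ q = R n.
Proof.
  intros Hpq [Pp [HPp Hin]] Hq.
  destruct (classic (In q Pp)) as [HqP|HqP].
  - destruct (in_split _ _ HqP) as [X [Y E]].
    assert (HY : In (R (S n)) Y).
    { rewrite E in Hin. apply in_app_or in Hin as [H|[H|H]]; auto; exfalso; apply Hq;
        exists (X ++ [q]); (split; [exact (is_path_prefix HPp E)|]); apply in_or_app; simpl; auto. }
    assert (Hqp : is_path tadj [q; p] q p).
    { repeat split; simpl; [|apply (proj1 tree); exact Hpq].
      constructor; [|constructor; [intros []|constructor]].
      intros [Heq|[]]. subst. exact (proj1 (proj2 tree) _ Hpq). }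
    pose proof (tree_path_unique tree (is_path_suffix HPp E) Hqp) as E2.
    injection E2 as ->. destruct HY as [->|[]]. split; auto.
    pose proof (tree_path_unique tree HPp (rooted_ray_path (S n))) as E3.
    rewrite E, seq_S, seq_S, !map_app in E3. simpl in E3.
    replace (X ++ [q; R (S n)]) with ((X ++ [q]) ++ [R (S n)]) in E3
      by (rewrite <- app_assoc; reflexivity).
    apply app_inj_tail in E3 as [E3 _]. apply app_inj_tail in E3 as [_ E3]. auto.
  - exfalso. apply Hq. exists (Pp ++ [q]). split.
    + apply is_path_snoc with p; auto.
    + apply in_or_app. left. exact Hin.
Qed.

Lemma bag_across_ray_adh n u w x :
  bag u x -> bag w x -> ray_subtree n u -> ~ ray_subtree n w -> ray_adh n x.
Proof.
  intros Hu Hw Hnu Hnw. pose proof (proj2 (proj2 (proj2 td))) as Hconv.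
  destruct (proj2 (proj2 tree) u w) as [Q [HQ _]]. pose proof HQ as [_ [Hc [Hh Hl]]].
  destruct (chain_crossing (Pr := ray_subtree n) Hc Hh Hnu) as [p [q [Hp [Hq [Hpq [Hnp Hnq]]]]]].
  { rewrite Hl. exact Hnw. }
  destruct (ray_subtree_boundary Hpq Hnp Hnq) as [-> ->].
  split; eapply Hconv; eauto.
Qed.

Lemma ray_up_not_bag n x : bag (R n) x -> ~ ray_up n x.
Proof.
  intros Hb [[u [Hu Hbu]] HnA]. apply HnA.
  apply (bag_across_ray_adh Hbu Hb Hu). rewrite ray_subtree_ray_iff. lia.
Qed.

Lemma ray_up_adj n v w : adj v w -> ray_up n w -> ray_up n v \/ ray_adh n v.
Proof.
  intros Hvw [[u' [Hu' Hbu']] HnA].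
  destruct (proj1 (proj2 (proj2 td)) v w Hvw) as [u [Hv Hw]].
  destruct (classic (ray_subtree n u)) as [Hu|Hu].
  - destruct (classic (ray_adh n v)); auto. left. split; eauto.
  - exfalso. exact (HnA (bag_across_ray_adh Hbu' Hw Hu' Hu)).
Qed.

Lemma ray_up_antitone n m x : n <= m -> ray_up m x -> ray_up n x.
Proof.
  intros Hnm [[u [Hu Hbu]] HnA]. split.
  - exists u. split; auto. exact (ray_subtree_antitone Hnm Hu).
  - intros [H1 H2]. apply HnA. destruct (Nat.eq_dec n m) as [<-|Hne]; [split; auto|].
    apply (bag_across_ray_adh Hbu H2 Hu). rewrite ray_subtree_ray_iff. lia.
Qed.

Lemma ray_up_eventually_not x : exists M, forall n, M <= n -> ~ ray_up n x.
Proof.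
  destruct (proj1 (proj2 td) x) as [u0 Hu0].
  destruct (proj2 (proj2 tree) r u0) as [P0 [HP0 _]].
  exists (length P0). intros n Hn [[u [Hu Hbu]] HnA]. apply HnA.
  apply (bag_across_ray_adh Hbu Hu0 Hu). intros Hn0.
  pose proof (ray_subtree_path_length Hn0 HP0). lia.
Qed.

Lemma ray_up_eventually_avoids (L : list V) :
  exists M, forall x, In x L -> forall n, M <= n -> ~ ray_up n x.
Proof.
  induction L as [|a L [M HM]]; [exists 0; intros x []|].
  destruct (ray_up_eventually_not a) as [Ma HMa].
  exists (Nat.max M Ma). intros x [<-|Hx] n Hn; [apply HMa|apply HM]; auto; lia.
Qed.

Lemma conn_enters_ray_up X n a b :
  conn adj X a b -> ~ ray_up n a -> ray_up n b -> exists p, conn adj X a p /\ ray_adh n p.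
Proof.
  intros Hab Ha Hb. destruct (conn_crossing Hab Ha Hb) as [p [q [Hap [Hpq [Hp Hq]]]]].
  exists p. split; auto. destruct (ray_up_adj Hpq Hq); tauto.
Qed.

Hypothesis adj_sym : symmetric_rel adj.
Hypothesis fin : finite_parts bag.

Section ArisingEnd.
Variable E : (nat -> V) -> Prop.
Hypothesis E_end : is_end adj E.
Hypothesis E_arises : arises adj tadj r bag E R.

Lemma in_comp_ray_up n x : in_comp adj (bag (R n)) E x -> ray_up n x.
Proof. intros H. apply (proj2 E_arises). apply compC_iff_in_comp. exact H. Qed.

Lemma in_comp_antitone j j' x :
  j <= j' -> in_comp adj (bag (R j')) E x -> in_comp adj (bag (R j)) E x.
Proof.
  intros Hj Hx. apply (in_comp_transfer adj_sym E_end Hx).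
  intros z Hz Hb. apply (ray_up_not_bag Hb), (ray_up_antitone Hj), in_comp_ray_up, Hz.
Qed.

Lemma in_comp_of_ray_up_disjoint (X : list V) j w :
  (forall x, In x X -> ~ ray_up j x) -> in_comp adj (bag (R j)) E w ->
  in_comp adj (fun x => In x X) E w.
Proof.
  intros HX Hw. apply (in_comp_transfer adj_sym E_end Hw).
  intros z Hz Hin. exact (HX z Hin (in_comp_ray_up Hz)).
Qed.

Lemma end_ray_eventually_in_comp b P :
  E P -> exists K, forall k, K <= k -> in_comp adj (bag (R b)) E (P k).
Proof.
  intros HP. apply (in_comp_eventually adj_sym E_end (fin (R b)) HP).
  destruct (proj1 E_arises P HP b) as [L HL].
  destruct (injective_eventually_avoids L (proj1 (end_ray E_end HP))) as [K HK].
  exists K. intros k Hk Hb. apply (HK k Hk), HL. eauto.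
Qed.

Lemma in_comp_meets_later_bag b :
  exists c z, b <= c /\ in_comp adj (bag (R c)) E z /\ bag (R (S c)) z.
Proof.
  (* Otherwise C_b stays inside every later C_c ⊆ U_c, but its vertices leave U_c. *)
  apply NNPP. intros Hno.
  assert (Hgrow : forall d x, in_comp adj (bag (R b)) E x -> in_comp adj (bag (R (b + d))) E x).
  { induction d as [|d IH]; intros x Hx; [rewrite Nat.add_0_r; exact Hx|].
    rewrite Nat.add_succ_r. apply (in_comp_transfer adj_sym E_end (IH x Hx)).
    intros z Hz Hbz. apply Hno. exists (b + d), z. split; [lia|auto]. }
  destruct (end_inhabited E_end) as [P HP].
  destruct (end_ray_eventually_in_comp b HP) as [K HK].
  destruct (ray_up_eventually_not (P K)) as [M HM].
  apply (HM (b + M)); [lia|]. apply in_comp_ray_up, Hgrow, HK. lia.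
Qed.

Definition attached (n : nat) (x : V) : Prop :=
  bag (R n) x /\ exists y, in_comp adj (bag (R n)) E y /\ adj x y.

Lemma attached_ray_adh n x : attached n x -> ray_adh n x.
Proof.
  intros [Hb [y [Hy Hxy]]]. destruct (ray_up_adj Hxy (in_comp_ray_up Hy)) as [H|H]; auto.
  exfalso. exact (ray_up_not_bag Hb H).
Qed.

Lemma attached_later b c w :
  b <= c -> attached c w -> in_comp adj (bag (R b)) E w \/ attached b w.
Proof.
  intros Hbc [_ [y [Hy Hwy]]]. pose proof (in_comp_antitone Hbc Hy) as Hy'.
  destruct (classic (bag (R b) w)) as [Hb|Hb].
  - right. split; eauto.
  - left. exact (in_comp_adj adj_sym Hy' Hwy Hb).
Qed.

Lemma attached_min_count s :
  exists b L, s <= b /\ NoDup L /\ (forall x, In x L <-> attached b x) /\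
    forall c, s <= c -> has_at_least (attached c) (length L).
Proof.
  assert (Henum : forall c, exists L, NoDup L /\ forall x, In x L <-> attached c x).
  { intros c. apply finite_enum. destruct (fin (R c)) as [L HL]. exists L. intros x [Hx _]. auto. }
  set (Q := fun k => exists b L, s <= b /\ NoDup L /\ (forall x, In x L <-> attached b x) /\
                                 length L = k).
  destruct (Henum s) as [Ls [HLs HLsa]].
  assert (HQs : Q (length Ls)) by (exists s, Ls; auto).
  destruct (exists_least_nat HQs) as [mu [[b [L [Hb [HL [HLa <-]]]]] Hmin]].
  exists b, L. split; [exact Hb|split; [exact HL|split; [exact HLa|]]]. intros c Hc.
  destruct (Henum c) as [Lc [HLc HLca]].
  apply has_at_least_of_list with Lc; auto; [intros x; apply HLca|].
  apply Hmin. exists c, Lc. auto.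
Qed.

Lemma path_from_unattached n P y b :
  is_path adj P y b -> bag (R n) y -> ~ attached n y ->
  (forall x, In x P -> attached n x -> x = y) ->
  ~ (in_comp adj (bag (R n)) E b \/ attached n b).
Proof.
  intros [_ [Hc [Hh Hl]]] Hy Hny HP [Hb|Hb].
  - destruct (chain_crossing (Pr := fun x => ~ in_comp adj (bag (R n)) E x) Hc Hh)
      as [p [q [Hp [_ [Hpq [Hnp Hnq]]]]]].
    + intros [H _]. exact (H Hy).
    + rewrite Hl. tauto.
    + apply NNPP in Hnq. destruct (classic (bag (R n) p)) as [Hbp|Hbp].
      * assert (Hap : attached n p) by (split; eauto).
        apply Hny. rewrite <- (HP p Hp Hap). exact Hap.
      * exact (Hnp (in_comp_adj adj_sym Hnq Hpq Hbp)).
  - assert (HbP : In b P).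
    { destruct P as [|x P]; [discriminate|]. injection Hh as ->. rewrite <- Hl. apply last_cons_In. }
    apply Hny. rewrite <- (HP b HbP Hb). exact Hb.
Qed.

Lemma no_linkage_from_unattached n y L Zt (Ps : nat -> list V) :
  bag (R n) y -> ~ attached n y -> NoDup (y :: L) -> (forall x, In x L <-> attached n x) ->
  (forall x, In x Zt -> in_comp adj (bag (R n)) E x \/ attached n x) ->
  (forall i, i < length (y :: L) -> AB_path adj (fun x => In x (y :: L)) (fun x => In x Zt) (Ps i)) ->
  ~ (forall i j x, i < length (y :: L) -> j < length (y :: L) -> i <> j ->
       In x (Ps i) -> ~ In x (Ps j)).
Proof.
  intros Hy Hny HZs HL HZt HPs Hdisj.
  destruct (disjoint_AB_paths_sources HZs HPs Hdisj (in_eq y L)) as [i [Hi Hhd]].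
  destruct (HPs i Hi) as [a [b [Hpath [_ [Hb [HA _]]]]]].
  assert (a = y) as -> by (destruct Hpath as [_ [_ [Hh _]]]; congruence).
  apply (path_from_unattached Hpath Hy Hny); [|exact (HZt b Hb)].
  intros x Hx Hxa. apply HA; auto. right. apply HL. exact Hxa.
Qed.

Lemma attached_targets b c z k :
  b <= c -> in_comp adj (bag (R c)) E z -> bag (R (S c)) z -> has_at_least (attached c) k ->
  has_at_least (fun w => bag (R (S c)) w /\
                  (in_comp adj (bag (R b)) E w \/ attached b w)) (S k).
Proof.
  intros Hbc Hz Hzb Hk. apply has_at_least_add with (attached c) z; auto.
  - intros [Hb _]. exact (proj1 Hz Hb).
  - split; [exact Hzb|]. left. exact (in_comp_antitone Hbc Hz).
  - intros w Hw. split; [exact (proj2 (attached_ray_adh Hw))|]. exact (attached_later Hbc Hw).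
Qed.

Lemma dominates_liminf_adh v : dominates adj E v -> liminf_adh bag R v.
Proof.
  intros Hdom. apply NNPP. intros Hno.
  destruct (ray_up_eventually_not v) as [M HM].
  assert (Hi : exists i, M <= i /\ ~ ray_adh i v).
  { apply NNPP. intros H. apply Hno. exists M. intros i Hi. apply NNPP. intros Hv. apply H. eauto. }
  destruct Hi as [i [Hi Hv]].
  destruct (finite_enum (X := ray_adh i)) as [L [_ HL]].
  { destruct (fin (R i)) as [L HL]. exists L. intros x [Hx _]. auto. }
  assert (HvL : ~ In v L) by (rewrite HL; exact Hv).
  pose proof (Hdom L HvL) as Hc. apply compC_iff_in_comp in Hc.
  destruct (end_inhabited E_end) as [P HP].
  destruct (in_comp_ray_tail E_end Hc HP) as [n Hn].
  destruct (end_ray_eventually_in_comp i HP) as [K HK].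
  destruct (conn_enters_ray_up (Hn (Nat.max n K) ltac:(lia)) (HM i Hi)) as [p [Hvp Hp]].
  { apply in_comp_ray_up, HK. lia. }
  apply (conn_notin_r Hvp). apply HL. exact Hp.
Qed.

End ArisingEnd.

Hypothesis H_lean : lean adj tadj bag.

Section LeanArisingEnd.
Variable E : (nat -> V) -> Prop.
Hypothesis E_end : is_end adj E.
Hypothesis E_arises : arises adj tadj r bag E R.

Lemma adhesion_eventually_attached s :
  exists j, s <= j /\ forall x, ray_adh j x -> attached E j x.
Proof.
  apply NNPP. intros Hno.
  assert (Hbad : forall j, s <= j -> exists y, ray_adh j y /\ ~ attached E j y).
  { intros j Hj. apply NNPP. intros H. apply Hno. exists j. split; auto.
    intros x Hx. apply NNPP. intros Hx'. apply H. eauto. }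
  destruct (attached_min_count E s) as [b0 [L0 [Hb0 [HL0 [HL0a Hmin]]]]].
  (* By minimality of |L0|, V_{e_j} holds |L0| attached vertices and an unattached one. *)
  assert (Hlarge : forall j, s <= j -> ~ card_lt (ray_adh j) (S (length L0))).
  { intros j Hj. destruct (Hbad j Hj) as [y [Hy Hny]].
    apply has_at_least_not_card_lt, has_at_least_add with (attached E j) y; auto.
    intros x. apply (attached_ray_adh E_arises). }
  destruct (in_comp_meets_later_bag E_end E_arises b0) as [c [z [Hc [Hz Hzb]]]].
  destruct (attached_targets E_end E_arises Hc Hz Hzb (Hmin c ltac:(lia)))
    as [Zt [HZt [HZtl HZtX]]].
  destruct (Hbad b0 Hb0) as [y [Hy Hny]].
  assert (HZs : NoDup (y :: L0)) by (constructor; auto; rewrite HL0a; exact Hny).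
  assert (HZs_bag : forall x, In x (y :: L0) -> bag (R b0) x).
  { intros x [<-|Hx]; [exact (proj1 Hy)|]. apply HL0a in Hx. exact (proj1 Hx). }
  assert (HZt_bag : forall x, In x Zt -> bag (R (S c)) x) by (intros x Hx; apply HZtX, Hx).
  destruct (H_lean HZs HZt eq_refl HZtl HZs_bag HZt_bag) as [[Ps [HPs Hdisj]]|Hcut].
  - exact (no_linkage_from_unattached (proj1 Hy) Hny HZs HL0a (fun x Hx => proj2 (HZtX x Hx))
             HPs Hdisj).
  - destruct (Hcut (map R (seq b0 (S (S c - b0))))) as [k [a [b [Hka [Hkb Hsmall]]]]].
    { replace (R (S c)) with (R (b0 + (S c - b0))) by (f_equal; lia).
      apply ray_segment_path, (proj1 R_rooted). }
    apply nth_error_map_seq in Hka, Hkb. subst a b.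
    apply (Hlarge (b0 + k)); [lia|]. rewrite Nat.add_succ_r in Hsmall. exact Hsmall.
Qed.

Lemma liminf_adh_dominates v : liminf_adh bag R v -> dominates adj E v.
Proof.
  intros [n Hn] X HvX. apply compC_iff_in_comp.
  destruct (ray_up_eventually_avoids X) as [M HM].
  destruct (adhesion_eventually_attached (Nat.max n M)) as [j [Hj HA]].
  destruct (HA v (Hn j ltac:(lia))) as [_ [w [Hw Hvw]]].
  apply (in_comp_adj adj_sym (y := w)); auto.
  apply (in_comp_of_ray_up_disjoint E_end E_arises (j := j)); auto.
  intros x Hx. apply HM; auto; lia.
Qed.

End LeanArisingEnd.

Section TwoEnds.
Variables E1 E2 : (nat -> V) -> Prop.
Hypotheses (E1_end : is_end adj E1) (E2_end : is_end adj E2).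
Hypotheses (E1_arises : arises adj tadj r bag E1 R) (E2_arises : arises adj tadj r bag E2 R).

Lemma arising_comps_meet j :
  exists w, in_comp adj (bag (R j)) E1 w /\ in_comp adj (bag (R j)) E2 w.
Proof.
  (* A ray of E1 eventually runs in C_j(E1) and enters U_j2 through V_{e_j2}, all of whose
     vertices have a neighbour in C_j2(E2) ⊆ C_j(E2). *)
  destruct (end_inhabited E1_end) as [P HP].
  destruct (end_ray_eventually_in_comp E1_end E1_arises j HP) as [I HI].
  destruct (ray_up_eventually_not (P I)) as [M HM].
  destruct (adhesion_eventually_attached E2_end E2_arises (Nat.max j M)) as [j2 [Hj2 HA]].
  destruct (end_ray_eventually_in_comp E1_end E1_arises j2 HP) as [K HK].
  assert (HIK : conn adj (bag (R j)) (P I) (P (Nat.max I K))).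
  { apply (in_comp_connected adj_sym E1_end); apply HI; lia. }
  destruct (conn_enters_ray_up HIK (HM j2 ltac:(lia))) as [p [HIp Hp]].
  { apply (in_comp_ray_up E1_arises), HK. lia. }
  destruct (HA p Hp) as [_ [u [Hu Hpu]]].
  pose proof (in_comp_conn adj_sym (HI I (le_n I)) HIp) as Hp1.
  exists p. split; auto.
  apply (in_comp_adj adj_sym (y := u)); [|exact Hpu|exact (proj1 Hp1)].
  apply (in_comp_antitone E2_end E2_arises (j' := j2)); [lia|exact Hu].
Qed.

Lemma arising_ends_rays_equiv P Q : E1 P -> E2 Q -> ray_equiv adj P Q.
Proof.
  intros HP HQ X.
  destruct (ray_up_eventually_avoids X) as [j Hj].
  destruct (arising_comps_meet j) as [w [Hw1 Hw2]].
  assert (HXj : forall x, In x X -> ~ ray_up j x) by (intros x Hx; apply Hj; auto).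
  exact (in_comp_common_ray_equiv adj_sym
           (in_comp_of_ray_up_disjoint E1_end E1_arises HXj Hw1)
           (in_comp_of_ray_up_disjoint E2_end E2_arises HXj Hw2) HP HQ).
Qed.

End TwoEnds.
End RayDecomposition.

Theorem lemma3p5 (V N : Type) (adj : V -> V -> Prop) (tadj : N -> N -> Prop)
  (bag : N -> V -> Prop) (r : N) :
  symmetric_rel adj -> irreflexive_rel adj ->
  tree_decomposition adj tadj bag -> finite_parts bag -> lean adj tadj bag ->
  (forall (R : nat -> N) (E1 E2 : (nat -> V) -> Prop),
      rooted_ray tadj r R -> is_end adj E1 -> is_end adj E2 ->
      arises adj tadj r bag E1 R -> arises adj tadj r bag E2 R ->
      forall R' : nat -> V, E1 R' <-> E2 R') /\
  (forall (R : nat -> N) (E : (nat -> V) -> Prop),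
      rooted_ray tadj r R -> is_end adj E -> arises adj tadj r bag E R ->
      forall v : V, liminf_adh bag R v <-> dominates adj E v).
Proof.
  intros adj_sym _ td fin H_lean. split.
  - intros R E1 E2 HR He1 He2 Har1 Har2.
    apply (end_eq_of_rays_equiv adj_sym He1 He2).
    exact (arising_ends_rays_equiv td HR adj_sym fin H_lean He1 He2 Har1 Har2).
  - intros R E HR He Har v. split.
    + apply (liminf_adh_dominates td HR adj_sym fin H_lean He Har).
    + apply (dominates_liminf_adh td HR adj_sym fin He Har).
Qed.
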